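(* Let $p$ be a prime, $m\ge1$, $s\ge0$ integers, $R^4=\mathbb{F}_{p^m}[u]/\langle u^4\rangle$, $f(x)\in\mathbb{F}_{p^m}[x]$ irreducible, $\omega(x)=f(x)^{p^s}$, $R^{4,\omega}=R^4[x]/\langle\omega(x)\rangle$, $R^{1,\omega}=\mathbb{F}_{p^m}[x]/\langle\omega(x)\rangle$. Let $a,t_1,t_2$ be integers with $0\le t_2<t_1<a\le p^s-1$ and let $h_1(x),h_2(x)\in R^{1,\omega}$ each be either $0$ or a unit of $R^{1,\omega}$. Let $L$ be the smallest non-negative integer such that $u^3f(x)^L\in\langle uf(x)^a+u^2f(x)^{t_1}h_1(x)+u^3f(x)^{t_2}h_2(x)\rangle$ (ideal of $R^{4,\omega}$). Then $$L=\begin{cases} a, & h_1=h_2=0,\\ \min\{a,\ p^s-a+t_2\}, & h_1=0,\ h_2\ne0,\\ \min\{a,\ p^s-2(a-t_1)\}, & h_1\ne0,\ h_2=0,\ a\le p^s-a+t_1,\\ t_1, & h_1\ne0,\ h_2=0,\ a\ge p^s-a+t_1,\\ \min\{a,\ p^s-a+t_1,\ \beta_1\}, & h_1\ne0,\ h_2\ne0,\ a\le p^s-a+t_1,\\ \min\{a,\ p^s+t_2-t_1,\ \beta_2\}, & h_1\ne0,\ h_2\ne0,\ a\ge p^s-a+t_1, \end{cases}$$ where $\beta_1=\max\{k: f(x)^k \text{ divides } f(x)^{p^s-a+t_2}h_2(x)-f(x)^{p^s-2a+2t_1}h_1(x)^2\}$ and $\beta_2=\max\{k: f(x)^k \text{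 divides } f(x)^{t_1}h_1(x)-f(x)^{a+t_2-t_1}h_2(x)h_1(x)^{-1}\}$, divisibility being taken in $R^{1,\omega}$.
   Context: $R^{1,\omega}$ is identified with the subring of $R^{4,\omega}$ consisting of classes of polynomials over $\mathbb{F}_{p^m}$ (no $u$). *)

From HB Require Import structures.
From mathcomp Require Import all_boot all_order all_algebra all_field.
Set Implicit Arguments. Unset Strict Implicit. Unset Printing Implicit Defensive.
Import GRing.Theory.
Local Open Scope ring_scope.

(* Elements of R^{1,w} = F[x]/<w> are represented by polynomials of {poly F}
   (representatives); elements of R^{4,w} = (F[u]/<u^4>)[x]/<w>
   = F[x,u]/<u^4, w(x)> by bivariate polynomials {poly {poly F}}, where the
   OUTER variable 'X is u and the coefficients are polynomials in x. *)

Section Defs.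
Variable F : fieldType.

Definition is_zero1 (w h : {poly F}) : Prop := w %| h.
Definition is_unit1 (w h : {poly F}) : Prop := exists v : {poly F}, w %| h * v - 1.
Definition divides1 (w d X : {poly F}) : Prop := exists c : {poly F}, w %| d * c - X.

Definition eq4 (w : {poly F}) (z1 z2 : {poly {poly F}}) : Prop :=
  exists q1 q2 : {poly {poly F}}, z1 - z2 = 'X ^+ 4 * q1 + w%:P * q2.
Definition in_ideal4 (w : {poly F}) (g z : {poly {poly F}}) : Prop :=
  exists r : {poly {poly F}}, eq4 w z (r * g).

Definition gen4 (f : {poly F}) (a t1 t2 : nat) (h1 h2 : {poly F}) : {poly {poly F}} :=
  'X * (f ^+ a)%:P + 'X ^+ 2 * (f ^+ t1 * h1)%:P + 'X ^+ 3 * (f ^+ t2 * h2)%:P.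

Definition least_exp (w f : {poly F}) (g : {poly {poly F}}) (L : nat) : Prop :=
  in_ideal4 w g ('X ^+ 3 * (f ^+ L)%:P) /\
  forall k : nat, in_ideal4 w g ('X ^+ 3 * (f ^+ k)%:P) -> (L <= k)%N.

Definition is_max_div (w f X : {poly F}) (b : nat) : Prop :=
  divides1 w (f ^+ b) X /\ forall k : nat, divides1 w (f ^+ k) X -> (k <= b)%N.

(* L = min{m0, beta} where beta = max{k : f^k divides X in R^{1,w}};
   if every f^k divides X (X = 0), beta = +oo and the minimum is m0. *)
Definition eq_min_beta (w f X : {poly F}) (m0 L : nat) : Prop :=
  (forall b : nat, is_max_div w f X b -> L = minn m0 b) /\
  ((forall k : nat, divides1 w (f ^+ k) X) -> L = m0).
End Defs.

(* A multiplier r0 + r1 u + r2 u^2 + ... of g = u A + u^2 B + u^3 C, where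
   A = f^a, B = f^t1 h1, C = f^t2 h2, gives r g the coefficients r0 A,
   r1 A + r0 B and r2 A + r1 B + r0 C at u, u^2, u^3.  So u^3 f^k lies in <g>
   iff f^k is congruent mod f^N (N = p^s) to a u^3-coefficient whose two lower
   coefficients vanish mod f^N, and L is the largest e <= N such that f^e
   divides all these u^3-coefficients and is itself one of them.  The vanishing
   conditions force f^(N-a) | r0 and, when h1 is a unit, determine r1 modulo
   f^(N-a) in terms of r0; substituting writes the u^3-coefficient as a
   combination of a few explicit terms (f^a, f^(N-a+t1), f^(N-a+t2) h2, the
   polynomial defining beta, ...), which gives the lower bound, and explicit
   multipliers attain it. *)

From HB Require Import structures.
From mathcomp Require Import all_boot all_order all_algebra all_field.
From mathcomp Require Import ring zify.
Set Implicit Arguments. Unset Strict Implicit. Unset Printing Implicit Defensive.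
Import GRing.Theory.
Local Open Scope ring_scope.

Section LinearCombinations.
Variable R : idomainType.
Implicit Types d q X Y : {poly R}.

Lemma dvdp_lincomb1 d Y q X : d %| Y -> X = q * Y -> d %| X.
Proof. by move=> dY ->; apply: dvdp_mull. Qed.

Lemma dvdp_lincomb2 d Y1 Y2 q1 q2 X :
  d %| Y1 -> d %| Y2 -> X = q1 * Y1 + q2 * Y2 -> d %| X.
Proof. by move=> dY1 dY2 ->; apply: dvdp_add; apply: dvdp_mull. Qed.

Lemma dvdp_lincomb3 d Y1 Y2 Y3 q1 q2 q3 X :
  d %| Y1 -> d %| Y2 -> d %| Y3 -> X = q1 * Y1 + q2 * Y2 + q3 * Y3 -> d %| X.
Proof.
by move=> dY1 dY2 dY3 ->; apply: dvdp_add; [apply: dvdp_lincomb2 dY1 dY2 _|apply: dvdp_mull].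
Qed.

Lemma dvdp_lincomb4 d Y1 Y2 Y3 Y4 q1 q2 q3 q4 X :
  d %| Y1 -> d %| Y2 -> d %| Y3 -> d %| Y4 ->
  X = q1 * Y1 + q2 * Y2 + q3 * Y3 + q4 * Y4 -> d %| X.
Proof.
move=> dY1 dY2 dY3 dY4 ->; apply: dvdp_add; last exact: dvdp_mull.
exact: dvdp_lincomb3 dY1 dY2 dY3 _.
Qed.
End LinearCombinations.

Section IdealMembership.
Variable F : fieldType.
Implicit Types (w f A B C c X : {poly F}) (g z : {poly {poly F}}).

Lemma eq4P w z1 z2 : eq4 w z1 z2 <-> forall i, (i < 4)%N -> w %| (z1 - z2)`_i.
Proof.
split=> [[q1 [q2 ->]] i lti4|dvd_coef].
  by rewrite coefD coefXnM lti4 add0r coefCM dvdp_mulr.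
set d := z1 - z2.
exists (\poly_(i < size d) d`_(i + 4)), (\poly_(i < 4) (d`_i %/ w)).
apply/polyP => i; rewrite [RHS]coefD coefXnM coefCM !coef_poly.
case: ltnP => lti4; first by rewrite add0r mulrC divpK ?dvd_coef.
rewrite mulr0 addr0 subnK //; case: ltnP => // le_size.
by rewrite nth_default // (leq_trans le_size) ?leq_subr.
Qed.

Lemma coef_mul_u123 z A B C i :
  (z * ('X * A%:P + 'X ^+ 2 * B%:P + 'X ^+ 3 * C%:P))`_i =
  (if i == 0%N then 0 else z`_i.-1 * A) +
  (if (i < 2)%N then 0 else z`_(i - 2) * B) +
  (if (i < 3)%N then 0 else z`_(i - 3) * C).
Proof.
rewrite !mulrDr [z * ('X * _)]mulrA [z * ('X ^+ 2 * _)]mulrA [z * ('X ^+ 3 * _)]mulrA.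
rewrite !coefD !coefMC coefMX !coefMXn.
by case: (i == 0%N); case: (i < 2)%N; case: (i < 3)%N; rewrite ?mul0r.
Qed.

(* The witnesses r0, r1, r2 are the coefficients of 1, u, u^2 in a multiplier
   of the generator; higher coefficients only contribute in degree >= 4. *)
Definition u3_mem w A B C c := exists r0 r1 r2 : {poly F},
  [/\ w %| r0 * A, w %| r1 * A + r0 * B & w %| c - (r2 * A + r1 * B + r0 * C)].

Lemma in_ideal4_u3P w A B C c :
  in_ideal4 w ('X * A%:P + 'X ^+ 2 * B%:P + 'X ^+ 3 * C%:P) ('X ^+ 3 * c%:P)
  <-> u3_mem w A B C c.
Proof.
split=> [[r /eq4P dvd_coef]|[r0 [r1 [r2 [dvd_u dvd_u2 dvd_u3]]]]].
  exists r`_0, r`_1, r`_2.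
  move: (dvd_coef 1%N isT) (dvd_coef 2%N isT) (dvd_coef 3%N isT).
  rewrite !coefB !coef_mul_u123 !coefXnM !coefC /=.
  by rewrite !addr0 !sub0r !dvdpNr => *; split.
exists (Poly [:: r0; r1; r2]); apply/eq4P => i lti4.
rewrite coefB coef_mul_u123 coefXnM coefC !coef_Poly.
by case: i lti4 => [|[|[|[|i]]]] //= _;
  rewrite ?subr0 ?sub0r ?dvdpNr ?addr0 ?add0r ?mul0r ?dvdp0.
Qed.

Lemma u3_mem_self w A B C : u3_mem w A B C A.
Proof. by exists 0, 0, 1; rewrite !mul0r mul1r !addr0 subrr !dvdp0. Qed.

Lemma least_exp_unique w f g L e :
  least_exp w f g L -> least_exp w f g e -> L = e.
Proof.
by move=> [memL minL] [meme mine]; apply/eqP; rewrite eqn_leq minL ?mine.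
Qed.

(* The guard [E < N] lets [E := N] stand for the case X = 0 in R^{1,w}, where
   beta is infinite. *)
Lemma eq_min_beta_of_least N f g X m0 L :
  (m0 <= N)%N -> least_exp (f ^+ N) f g L ->
  (forall E, divides1 (f ^+ N) (f ^+ E) X ->
     ((E < N)%N -> forall k, divides1 (f ^+ N) (f ^+ k) X -> (k <= E)%N) ->
     least_exp (f ^+ N) f g (minn m0 E)) ->
  eq_min_beta (f ^+ N) f X m0 L.
Proof.
move=> le_m0N leastL least_minE; split=> [b [divb maxb]|div_all].
  exact: least_exp_unique leastL (least_minE b divb (fun _ => maxb)).
rewrite -[m0](minn_idPl le_m0N); apply: least_exp_unique leastL _.
by apply: least_minE (div_all N) _; rewrite ltnn.
Qed.
End IdealMembership.

Section PowersOfIrreducible.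
Variables (F : fieldType) (f : {poly F}).
Hypothesis f_irr : irreducible_poly f.
Implicit Types (h v c q T X : {poly F}).

Lemma dvdp_expf_cancel m n q : f ^+ (m + n) %| q * f ^+ m -> f ^+ n %| q.
Proof. by rewrite addnC exprD dvdp_mul2r // expf_neq0 // irredp_neq0. Qed.

Lemma coprimep_expf n q : ~~ (f %| q) -> coprimep (f ^+ n) q.
Proof. by move=> nfq; rewrite coprimep_expl // irreducible_poly_coprime. Qed.

Lemma leq_of_dvdp_expf_sub e N k T :
  (e <= N)%N -> f ^+ e %| T -> f ^+ N %| f ^+ k - T -> (e <= k)%N.
Proof.
move=> le_eN dvd_eT /(dvdp_trans (dvdp_exp2l f le_eN)).
by rewrite dvdp_subl // dvdp_Pexp2l // f_irr.1.
Qed.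

Lemma unit_mod_expf_ndvd N h v : (0 < N)%N -> f ^+ N %| h * v - 1 -> ~~ (f %| h).
Proof.
move=> N_gt0 /(dvdp_trans (dvdp_exp2l f N_gt0)); rewrite expr1.
apply: contraL => dvd_fh; rewrite dvdp_subr ?dvdp_mulr // dvdp1.
by rewrite neq_ltn f_irr.1 orbT.
Qed.

Lemma divides1_dvdp N E e X :
  (e <= E)%N -> (e <= N)%N -> divides1 (f ^+ N) (f ^+ E) X -> f ^+ e %| X.
Proof.
move=> le_eE le_eN [c /(dvdp_trans (dvdp_exp2l f le_eN))].
by rewrite dvdp_subr // dvdp_mulr // dvdp_exp2l.
Qed.

(* Maximality of E forces the cofactor to be prime to f, hence a unit mod f^N. *)
Lemma max_divides1_unit_cofactor N E X :
  divides1 (f ^+ N) (f ^+ E) X ->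
  (forall k, divides1 (f ^+ N) (f ^+ k) X -> (k <= E)%N) ->
  exists c V, f ^+ N %| f ^+ E * c - X /\ f ^+ N %| c * V - 1.
Proof.
move=> [c dvd_c] maxE; exists c.
have ndvd_fc : ~~ (f %| c).
  apply/negP => /dvdpP [c' def_c].
  suff /maxE : divides1 (f ^+ N) (f ^+ E.+1) X by rewrite ltnn.
  by exists c'; rewrite exprSr mulrAC -mulrA -def_c.
have /Bezout_eq1_coprimepP [[u1 u2] /= bezout] := coprimep_expf N ndvd_fc.
exists u2; split=> //; rewrite -bezout opprD addrA [c * u2]mulrC addrAC subrr add0r dvdpNr.
exact: dvdp_mull.
Qed.

Lemma expf_dvdp_sub_leq i j k u w : i != j -> ~~ (f %| u) -> ~~ (f %| w) ->
  f ^+ k %| f ^+ i * u - f ^+ j * w -> (k <= minn i j)%N.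
Proof.
wlog lt_ij : i j u w / (i < j)%N.
  move=> wlog_lt ne_ij nfu nfw; move: (ne_ij); rewrite neq_ltn => /orP [lt_ij | lt_ji].
    exact: wlog_lt lt_ij ne_ij nfu nfw.
  rewrite -dvdpNr opprB minnC.
  by apply: wlog_lt lt_ji _ nfw nfu; rewrite eq_sym.
move=> _ nfu _ dvd_k; rewrite (minn_idPl (ltnW lt_ij)) leqNgt.
apply: contraNN nfu => lt_ik; move: (dvdp_trans (dvdp_exp2l f lt_ik) dvd_k).
rewrite dvdp_subl; last exact/dvdp_mulr/dvdp_exp2l.
by rewrite -addn1 mulrC => /dvdp_expf_cancel; rewrite expr1.
Qed.

Lemma least_exp_gen4_intro N a t1 t2 h1 h2 e : (e <= N)%N ->
  u3_mem (f ^+ N) (f ^+ a) (f ^+ t1 * h1) (f ^+ t2 * h2) (f ^+ e) ->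
  (forall r0 r1 r2, f ^+ N %| r0 * f ^+ a ->
     f ^+ N %| r1 * f ^+ a + r0 * (f ^+ t1 * h1) ->
     f ^+ e %| r2 * f ^+ a + r1 * (f ^+ t1 * h1) + r0 * (f ^+ t2 * h2)) ->
  least_exp (f ^+ N) f (gen4 f a t1 t2 h1 h2) e.
Proof.
move=> le_eN mem_e dvd_u3_coef; split=> [|k]; first exact/in_ideal4_u3P.
move=> /in_ideal4_u3P [r0 [r1 [r2 [dvd_u dvd_u2 dvd_u3]]]].
exact: leq_of_dvdp_expf_sub le_eN (dvd_u3_coef _ _ _ dvd_u dvd_u2) dvd_u3.
Qed.

Lemma least_exp_gen4_zero_zero N a t1 t2 h1 h2 :
  (a <= N)%N -> f ^+ N %| h1 -> f ^+ N %| h2 ->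
  least_exp (f ^+ N) f (gen4 f a t1 t2 h1 h2) a.
Proof.
move=> le_aN zero_h1 zero_h2; apply: least_exp_gen4_intro => //.
  exact: u3_mem_self.
have dvd_a h : f ^+ N %| h -> f ^+ a %| h by apply: dvdp_trans (dvdp_exp2l f le_aN).
move=> r0 r1 r2 _ _; apply: (dvdp_lincomb3 (q1 := r2) (q2 := r1 * f ^+ t1)
  (q3 := r0 * f ^+ t2) (dvdpp _) (dvd_a _ zero_h1) (dvd_a _ zero_h2)); ring.
Qed.

Lemma least_exp_gen4_zero_unit N a t1 t2 h1 h2 v2 :
  (a <= N)%N -> f ^+ N %| h1 -> f ^+ N %| h2 * v2 - 1 ->
  least_exp (f ^+ N) f (gen4 f a t1 t2 h1 h2) (minn a (N - a + t2)).
Proof.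
move=> le_aN zero_h1 unit_h2.
have [n def_N] : exists n, N = (a + n)%N by exists (N - a)%N; lia.
subst N; rewrite addKn; apply: least_exp_gen4_intro; first lia.
  case: leqP => _; first exact: u3_mem_self.
  exists (f ^+ n * v2), 0, 0; split.
  - by apply/dvdpP; exists v2; rewrite exprD; ring.
  - by apply: (dvdp_lincomb1 (q := f ^+ n * v2 * f ^+ t1) zero_h1); ring.
  - by apply: (dvdp_lincomb1 (q := - f ^+ (n + t2)) unit_h2); rewrite exprD; ring.
move=> r0 r1 r2 /dvdp_expf_cancel/dvdpP [c0 ->] _.
have dvd_h1 : f ^+ minn a (n + t2) %| h1.
  by apply: dvdp_trans zero_h1; apply: dvdp_exp2l; lia.
apply: (dvdp_lincomb3 (q1 := r2) (q2 := r1 * f ^+ t1) (q3 := c0 * h2)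
  (dvdp_exp2l f (geq_minl _ _)) dvd_h1 (dvdp_exp2l f (geq_minr _ _))).
by rewrite exprD; ring.
Qed.

Lemma least_exp_gen4_unit_zero_le N a t1 t2 h1 h2 v1 :
  (t1 <= a <= N)%N -> (a <= N - a + t1)%N ->
  f ^+ N %| h1 * v1 - 1 -> f ^+ N %| h2 ->
  least_exp (f ^+ N) f (gen4 f a t1 t2 h1 h2) (minn a (N + 2 * t1 - 2 * a)).
Proof.
move=> /andP [le_t1a le_aN] le_a_Nt1 unit_h1 zero_h2.
have [y [z [def_a def_N ->]]] : exists y z, [/\ a = (t1 + y)%N,
    N = (a + (y + z))%N & (N + 2 * t1 - 2 * a = z + t1)%N].
  by exists (a - t1)%N, (N - a - (a - t1))%N; split; lia.
subst N a; apply: least_exp_gen4_intro; first lia.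
  case: leqP => _; first exact: u3_mem_self.
  exists (- (f ^+ (y + z) * v1 ^+ 2)), (f ^+ z * v1 ^+ 2 * h1), 0; split.
  - by apply/dvdpP; exists (- v1 ^+ 2); rewrite !exprD; ring.
  - by apply/dvdpP; exists 0; rewrite !exprD; ring.
  - apply: (dvdp_lincomb2 (q1 := - f ^+ (z + t1) * (h1 * v1 + 1))
      (q2 := f ^+ (y + z) * v1 ^+ 2 * f ^+ t2) unit_h1 zero_h2).
    by rewrite !exprD; ring.
move=> r0 r1 r2 /dvdp_expf_cancel/dvdpP [c0 ->] dvd_u2.
have /dvdp_expf_cancel/dvdpP [c1 ->] : f ^+ (t1 + y + z) %| r1 * f ^+ (t1 + y).
  have le_N : (t1 + y + z <= t1 + y + (y + z))%N by lia.
  move: (dvdp_trans (dvdp_exp2l f le_N) dvd_u2); rewrite dvdp_addl //.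
  by apply/dvdpP; exists (c0 * h1); rewrite !exprD; ring.
have dvd_h2 : f ^+ minn (t1 + y) (z + t1) %| h2.
  by apply: dvdp_trans zero_h2; apply: dvdp_exp2l; lia.
apply: (dvdp_lincomb3 (q1 := r2) (q2 := c1 * h1) (q3 := c0 * f ^+ (y + z) * f ^+ t2)
  (dvdp_exp2l f (geq_minl _ _)) (dvdp_exp2l f (geq_minr _ _)) dvd_h2).
by rewrite !exprD; ring.
Qed.

Lemma least_exp_gen4_unit_zero_ge N a t1 t2 h1 h2 v1 :
  (a <= N)%N -> (N - a + t1 <= a)%N ->
  f ^+ N %| h1 * v1 - 1 -> f ^+ N %| h2 ->
  least_exp (f ^+ N) f (gen4 f a t1 t2 h1 h2) t1.
Proof.
move=> le_aN le_Nt1_a unit_h1 zero_h2.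
have [n [z [def_a def_N]]] : exists n z, a = (t1 + n + z)%N /\ N = (a + n)%N.
  by exists (N - a)%N, (a - t1 - (N - a))%N; split; lia.
subst N a; apply: least_exp_gen4_intro; first lia.
  exists (- (f ^+ (n + z) * v1 ^+ 2)), (v1 ^+ 2 * h1), 0; split.
  - by apply/dvdpP; exists (- (v1 ^+ 2 * f ^+ z)); rewrite !exprD; ring.
  - by apply/dvdpP; exists 0; rewrite !exprD; ring.
  - apply: (dvdp_lincomb2 (q1 := - f ^+ t1 * (h1 * v1 + 1))
      (q2 := f ^+ (n + z) * v1 ^+ 2 * f ^+ t2) unit_h1 zero_h2).
    by rewrite !exprD; ring.
move=> r0 r1 r2 _ _.
have dvd_h2 : f ^+ t1 %| h2 by apply: dvdp_trans zero_h2; apply: dvdp_exp2l; lia.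
have le_t1a : (t1 <= t1 + n + z)%N by lia.
apply: (dvdp_lincomb3 (q1 := r2) (q2 := r1 * h1) (q3 := r0 * f ^+ t2)
  (dvdp_exp2l f le_t1a) (dvdpp _) dvd_h2).
ring.
Qed.

Lemma least_exp_gen4_unit_unit_le N a t1 t2 h1 h2 v1 E :
  (t1 <= a <= N)%N -> (a <= N - a + t1)%N -> f ^+ N %| h1 * v1 - 1 ->
  let X := f ^+ (N - a + t2) * h2 - f ^+ (N + 2 * t1 - 2 * a) * h1 ^+ 2 in
  divides1 (f ^+ N) (f ^+ E) X ->
  ((E < N)%N -> forall k, divides1 (f ^+ N) (f ^+ k) X -> (k <= E)%N) ->
  least_exp (f ^+ N) f (gen4 f a t1 t2 h1 h2) (minn (minn a (N - a + t1)) E).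
Proof.
move=> /andP [le_t1a le_aN] le_a_Nt1 unit_h1.
have [y [z [def_a def_N [-> -> ->]]]] : exists y z, [/\ a = (t1 + y)%N,
    N = (a + (y + z))%N & [/\ (N - a + t2 = y + z + t2)%N,
    (N + 2 * t1 - 2 * a = z + t1)%N & (N - a + t1 = y + z + t1)%N]].
  by exists (a - t1)%N, (N - a - (a - t1))%N; split; [lia|lia|split; lia].
subst N a => X div_X max_X; set e := minn (minn _ _) E.
apply: least_exp_gen4_intro; first by rewrite /e; lia.
  have : e = (t1 + y)%N \/ e = (y + z + t1)%N \/ e = E /\ (E < t1 + y + (y + z))%N.
    by rewrite /e; lia.
  case=> [-> | [-> | [-> lt_EN]]].
  - exact: u3_mem_self.
  - exists 0, (f ^+ (y + z) * v1), 0; split.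
    + by rewrite mul0r dvdp0.
    + by apply/dvdpP; exists v1; rewrite !exprD; ring.
    + apply: (dvdp_lincomb1 (q := - f ^+ (y + z + t1)) unit_h1).
      by rewrite !exprD; ring.
  - have [c [V [dvd_c unit_c]]] := max_divides1_unit_cofactor div_X (max_X lt_EN).
    exists (f ^+ (y + z) * V), (- (f ^+ z * V * h1)), 0; split.
    + by apply/dvdpP; exists V; rewrite !exprD; ring.
    + by apply/dvdpP; exists 0; rewrite !exprD; ring.
    + apply: (dvdp_lincomb2 (q1 := V) (q2 := - f ^+ E) dvd_c unit_c).
      by rewrite /X !exprD; ring.
move=> r0 r1 r2 /dvdp_expf_cancel/dvdpP [c0 ->] dvd_u2.
have /dvdp_expf_cancel/dvdpP [q def_r1] :
    f ^+ (t1 + y + (y + z)) %| (r1 + c0 * f ^+ z * h1) * f ^+ (t1 + y).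
  by move: dvd_u2; rewrite (_ : (_ + _) * _ = r1 * f ^+ (t1 + y) +
    c0 * f ^+ (y + z) * (f ^+ t1 * h1)) // !exprD; ring.
have -> : r1 = q * f ^+ (y + z) - c0 * f ^+ z * h1 by rewrite -def_r1 addrK.
have dvd_X : f ^+ e %| X by apply: divides1_dvdp div_X; rewrite /e; lia.
have le_ea : (e <= t1 + y)%N by rewrite /e; lia.
have le_eNt1 : (e <= y + z + t1)%N by rewrite /e; lia.
apply: (dvdp_lincomb3 (q1 := r2) (q2 := q * h1) (q3 := c0)
  (dvdp_exp2l f le_ea) (dvdp_exp2l f le_eNt1) dvd_X).
by rewrite /X !exprD; ring.
Qed.

Section UnitUnitGe.
Variables (t1 t2 n z : nat) (h1 h2 v : {poly F}).
Hypothesis n_gt0 : (0 < n)%N.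
Local Notation a := (t1 + n + z)%N.
Local Notation N := (a + n)%N.
Local Notation X := (f ^+ t1 * h1 - f ^+ (n + z + t2) * h2 * v).
Hypothesis unit_h1 : f ^+ N %| h1 * v - 1.

Lemma ndvdp_h1_v : ~~ (f %| h1) /\ ~~ (f %| v).
Proof.
have N_gt0 : (0 < N)%N by lia.
split; first exact: unit_mod_expf_ndvd N_gt0 unit_h1.
by apply: (@unit_mod_expf_ndvd N v h1 N_gt0); rewrite mulrC.
Qed.

(* If t1 <> n + z + t2, the two terms of X have distinct valuations, so E is at
   most the smaller one and both minima equal E; otherwise
   N + t2 - t1 = N - a + t1. *)
Lemma minn_beta_unit_unit_ge v2 E : f ^+ N %| h2 * v2 - 1 ->
  divides1 (f ^+ N) (f ^+ E) X ->
  minn (minn a (n + z + n + t2)) E = minn (minn a (n + t1)) E.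
Proof.
move=> unit_h2 div_X; have [ndvd_h1 ndvd_v] := ndvdp_h1_v.
have ndvd_h2v : ~~ (f %| h2 * v).
  rewrite -!irreducible_poly_coprime // coprimepMr !irreducible_poly_coprime //.
  by rewrite ndvd_v (@unit_mod_expf_ndvd N _ v2) //; lia.
case: (eqVneq t1 (n + z + t2)) => [-> | ne_t1]; first lia.
have : (minn E N <= minn t1 (n + z + t2))%N.
  apply: expf_dvdp_sub_leq ne_t1 ndvd_h1 ndvd_h2v _; rewrite mulrA.
  by apply: divides1_dvdp div_X; lia.
lia.
Qed.

Lemma u3_mem_unit_unit_ge E : divides1 (f ^+ N) (f ^+ E) X ->
  ((E < N)%N -> forall k, divides1 (f ^+ N) (f ^+ k) X -> (k <= E)%N) ->
  u3_mem (f ^+ N) (f ^+ a) (f ^+ t1 * h1) (f ^+ t2 * h2) (f ^+ minn (minn a (n + t1)) E).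
Proof.
move=> div_X max_X; set e := minn _ E.
have : e = a \/ e = (n + t1)%N \/ e = E /\ (E < N)%N by rewrite /e; lia.
case=> [-> | [-> | [-> lt_EN]]].
- exact: u3_mem_self.
- exists 0, (f ^+ n * v), 0; split.
  + by rewrite mul0r dvdp0.
  + by apply/dvdpP; exists v; rewrite !exprD; ring.
  + apply: (dvdp_lincomb1 (q := - f ^+ (n + t1)) unit_h1).
    by rewrite !exprD; ring.
- have [c [V [dvd_c unit_c]]] := max_divides1_unit_cofactor div_X (max_X lt_EN).
  exists (- (f ^+ (n + z) * v * V)), (v * V * h1), 0; split.
  + by apply/dvdpP; exists (- (v * V * f ^+ z)); rewrite !exprD; ring.
  + by apply/dvdpP; exists 0; rewrite !exprD; ring.
  + apply: (dvdp_lincomb3 (q1 := - (f ^+ E * v * h1))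
      (q2 := - f ^+ E - f ^+ (n + z + t2) * v * V * h2) (q3 := v * h1 * V)
      unit_c unit_h1 dvd_c).
    by rewrite !exprD; ring.
Qed.

Lemma u3_coef_dvdp_unit_unit_ge E : divides1 (f ^+ N) (f ^+ E) X ->
  forall r0 r1 r2, f ^+ N %| r0 * f ^+ a -> f ^+ N %| r1 * f ^+ a + r0 * (f ^+ t1 * h1) ->
  f ^+ minn (minn a (n + t1)) E
    %| r2 * f ^+ a + r1 * (f ^+ t1 * h1) + r0 * (f ^+ t2 * h2).
Proof.
move=> div_X r0 r1 r2 /dvdp_expf_cancel/dvdpP [c0 ->] dvd_u2.
have /dvdp_expf_cancel/dvdpP [d0 def_c0] : f ^+ (n + t1 + z) %| c0 * f ^+ (n + t1).
  have le_N : (n + t1 + z <= N)%N by lia.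
  move: (dvdp_trans (dvdp_exp2l f le_N) dvd_u2); rewrite dvdp_addr; last first.
    by apply/dvdp_mull/dvdp_exp2l; lia.
  rewrite (_ : c0 * _ * _ = c0 * f ^+ (n + t1) * h1); last by rewrite !exprD; ring.
  by rewrite Gauss_dvdpl // coprimep_expf // ndvdp_h1_v.1.
subst c0.
have /dvdp_expf_cancel/dvdpP [q def_r1] : f ^+ N %| (r1 + d0 * h1) * f ^+ a.
  by move: dvd_u2; rewrite (_ : (_ + _) * _ = r1 * f ^+ a +
    d0 * f ^+ z * f ^+ n * (f ^+ t1 * h1)) // !exprD; ring.
have -> : r1 = q * f ^+ n - d0 * h1 by rewrite -def_r1 addrK.
set e := minn _ E.
have dvd_X : f ^+ e %| X by apply: divides1_dvdp div_X; rewrite /e; lia.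
have le_ea : (e <= a)%N by rewrite /e; lia.
have le_eNt1 : (e <= n + t1)%N by rewrite /e; lia.
have dvd_h1v : f ^+ e %| h1 * v - 1.
  by apply: dvdp_trans unit_h1; apply: dvdp_exp2l; rewrite /e; lia.
apply: (dvdp_lincomb4 (q1 := r2) (q2 := q * h1) (q3 := - (d0 * h1))
  (q4 := - (d0 * f ^+ (n + z + t2) * h2)) (dvdp_exp2l f le_ea) (dvdp_exp2l f le_eNt1)
  dvd_X dvd_h1v).
by rewrite !exprD; ring.
Qed.
End UnitUnitGe.

Lemma least_exp_gen4_unit_unit_ge N a t1 t2 h1 h2 v v2 E :
  (a < N)%N -> (N - a + t1 <= a)%N ->
  f ^+ N %| h1 * v - 1 -> f ^+ N %| h2 * v2 - 1 ->
  let X := f ^+ t1 * h1 - f ^+ (a + t2 - t1) * h2 * v in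
  divides1 (f ^+ N) (f ^+ E) X ->
  ((E < N)%N -> forall k, divides1 (f ^+ N) (f ^+ k) X -> (k <= E)%N) ->
  least_exp (f ^+ N) f (gen4 f a t1 t2 h1 h2) (minn (minn a (N + t2 - t1)) E).
Proof.
move=> lt_aN le_Nt1_a unit_h1 unit_h2.
have [n [z [def_a def_N [-> ->]]]] : exists n z, [/\ a = (t1 + n + z)%N,
    N = (a + n)%N & (a + t2 - t1 = n + z + t2)%N /\ (N + t2 - t1 = n + z + n + t2)%N].
  by exists (N - a)%N, (a - t1 - (N - a))%N; split; [lia|lia|split; lia].
subst N a => X div_X max_X; have n_gt0 : (0 < n)%N by lia.
rewrite (minn_beta_unit_unit_ge n_gt0 unit_h1 unit_h2 div_X).
apply: least_exp_gen4_intro; first lia.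
  exact (u3_mem_unit_unit_ge n_gt0 unit_h1 div_X max_X).
exact (u3_coef_dvdp_unit_unit_ge n_gt0 unit_h1 div_X).
Qed.
End PowersOfIrreducible.

Unset Implicit Arguments.

Theorem proposition4p2 (p m s : nat) (F : finFieldType) (f h1 h2 : {poly F})
    (a t1 t2 L : nat) :
  prime p -> (0 < m)%N -> #|F| = (p ^ m)%N -> irreducible_poly f ->
  (t2 < t1)%N -> (t1 < a)%N -> (a <= p ^ s - 1)%N ->
  is_zero1 (f ^+ (p ^ s)) h1 \/ is_unit1 (f ^+ (p ^ s)) h1 ->
  is_zero1 (f ^+ (p ^ s)) h2 \/ is_unit1 (f ^+ (p ^ s)) h2 ->
  least_exp (f ^+ (p ^ s)) f (gen4 f a t1 t2 h1 h2) L ->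
  (is_zero1 (f ^+ (p ^ s)) h1 -> is_zero1 (f ^+ (p ^ s)) h2 -> L = a) /\
      (is_zero1 (f ^+ (p ^ s)) h1 -> ~ is_zero1 (f ^+ (p ^ s)) h2 ->
         L = minn a (p ^ s - a + t2)) /\
      (~ is_zero1 (f ^+ (p ^ s)) h1 -> is_zero1 (f ^+ (p ^ s)) h2 ->
         (a <= p ^ s - a + t1)%N -> L = minn a (p ^ s + 2 * t1 - 2 * a)) /\
      (~ is_zero1 (f ^+ (p ^ s)) h1 -> is_zero1 (f ^+ (p ^ s)) h2 ->
         (p ^ s - a + t1 <= a)%N -> L = t1) /\
      (~ is_zero1 (f ^+ (p ^ s)) h1 -> ~ is_zero1 (f ^+ (p ^ s)) h2 ->
         (a <= p ^ s - a + t1)%N ->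
         eq_min_beta (f ^+ (p ^ s)) f
           (f ^+ (p ^ s - a + t2) * h2 - f ^+ (p ^ s + 2 * t1 - 2 * a) * h1 ^+ 2)
           (minn a (p ^ s - a + t1)) L) /\
      (~ is_zero1 (f ^+ (p ^ s)) h1 -> ~ is_zero1 (f ^+ (p ^ s)) h2 ->
         (p ^ s - a + t1 <= a)%N ->
         forall v : {poly F}, (f ^+ (p ^ s)) %| h1 * v - 1 ->
         eq_min_beta (f ^+ (p ^ s)) f
           (f ^+ t1 * h1 - f ^+ (a + t2 - t1) * h2 * v)
           (minn a (p ^ s + t2 - t1)) L).
Proof.
move=> p_prime _ _ f_irr _ lt_t1a le_a_N1 h1_cases h2_cases leastL.
have N_gt0 : (0 < p ^ s)%N by rewrite expn_gt0 prime_gt0.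
have lt_aN : (a < p ^ s)%N by lia.
have unit_h1 : ~ is_zero1 (f ^+ (p ^ s)) h1 -> is_unit1 (f ^+ (p ^ s)) h1.
  by case: h1_cases => // zero_h1 /(_ zero_h1).
have unit_h2 : ~ is_zero1 (f ^+ (p ^ s)) h2 -> is_unit1 (f ^+ (p ^ s)) h2.
  by case: h2_cases => // zero_h2 /(_ zero_h2).
have le_t1aN : (t1 <= a <= p ^ s)%N by rewrite (ltnW lt_t1a) (ltnW lt_aN).
have eqL := least_exp_unique leastL.
split; last split; last split; last split; last split.
- move=> zero_h1 zero_h2; apply/eqL.
  exact: least_exp_gen4_zero_zero (ltnW lt_aN) zero_h1 zero_h2.
- move=> zero_h1 /unit_h2 [v2 unit_v2]; apply/eqL.
  exact: least_exp_gen4_zero_unit (ltnW lt_aN) zero_h1 unit_v2.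
- move=> /unit_h1 [v1 unit_v1] zero_h2 le_a_Nt1; apply/eqL.
  exact: least_exp_gen4_unit_zero_le le_t1aN le_a_Nt1 unit_v1 zero_h2.
- move=> /unit_h1 [v1 unit_v1] zero_h2 le_Nt1_a; apply/eqL.
  exact: least_exp_gen4_unit_zero_ge (ltnW lt_aN) le_Nt1_a unit_v1 zero_h2.
- move=> /unit_h1 [v1 unit_v1] _ le_a_Nt1.
  apply: eq_min_beta_of_least leastL _ => [|E div_E max_E]; first lia.
  exact: least_exp_gen4_unit_unit_le le_t1aN le_a_Nt1 unit_v1 div_E max_E.
- move=> _ /unit_h2 [v2 unit_v2] le_Nt1_a v unit_v.
  apply: eq_min_beta_of_least leastL _ => [|E div_E max_E]; first lia.
  exact: least_exp_gen4_unit_unit_ge lt_aN le_Nt1_a unit_v unit_v2 div_E max_E.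
Qed.
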